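(* Consider a Pólya urn that initially contains $M$ balls, all of different colors. Repeatedly draw a ball uniformly at random from the urn and return it together with another ball of the same color, until there are $N$ balls in the urn ($N\ge M$, $N\ge2$). If two balls are then chosen uniformly at random (without replacement) from the urn, the probability that they have the same color is at most $2/(M+1)$. *)

From mathcomp Require Import all_boot all_order all_algebra.
Set Implicit Arguments. Unset Strict Implicit. Unset Printing Implicit Defensive.
Import Order.TTheory GRing.Theory Num.Theory.
Local Open Scope ring_scope.

(* An urn configuration: number of balls of each of the M colours. *)
Definition config (M : nat) := {ffun 'I_M -> nat}.

Definition total M (c : config M) : nat := (\sum_(i < M) c i)%N.

Definition incr M (c : config M) (i : 'I_M) : config M :=
  [ffun j => (c j + (j == i))%N].

Definition init_urn M : config M := [ffun _ => 1%N].

(* Expectation of f after k more Pólya steps starting from configuration c: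
   at each step colour i is drawn with probability c i / total c. *)
Fixpoint urn_exp M (f : config M -> rat) (k : nat) (c : config M) : rat :=
  match k with
  | 0 => f c
  | k'.+1 => \sum_(i < M) ((c i)%:R / (total c)%:R) * urn_exp f k' (incr c i)
  end.

(* Probability that two balls drawn uniformly at random without replacement
   from the urn c have the same colour: first draw colour i with probability
   c i / n, then again colour i with probability (c i - 1) / (n - 1). *)
Definition same_color_prob M (c : config M) : rat :=
  \sum_(i < M) ((c i)%:R / (total c)%:R) * (((c i)%:R - 1) / ((total c)%:R - 1)).

From Pilot Require Import Defs.
From mathcomp Require Import all_boot all_order all_algebra.
From mathcomp Require Import ring lra.
Import Order.TTheory GRing.Theory Num.Theory.
Set Implicit Arguments. Unset Strict Implicit.
Local Open Scope ring_scope.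

(* Let n be the number of balls and P(c) = sum_i c_i (c_i - 1)
   the number of ordered pairs of distinct balls of equal colour.  The quantity
     q(c) = P(c) / (n (n + 1)) + 2 / (n + 1)
   is a martingale of the Pólya urn: its expectation after one step equals its
   current value.  Once the urn holds N balls, the probability that two balls
   drawn without replacement share a colour is P / (N (N - 1)), which is the
   affine function ((N + 1) q - 2) / (N - 1) of q.  Hence the expected
   probability is ((N + 1) q0 - 2) / (N - 1), where q0 = 2 / (M + 1) is the
   value of q on the initial urn (for which P = 0), and this is at most q0
   because q0 <= 1.
   The file first proves the bookkeeping facts about one Pólya step, then the
   martingale property of q, then the general fact that the expectation of an
   affine function of a martingale is that affine function of its current
   value, and finally combines these. *)

Lemma total_incr M (c : config M) i : Defs.total (incr c i) = (Defs.total c).+1.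
Proof.
rewrite /Defs.total (bigD1 i) //= [in RHS](bigD1 i) //= ffunE eqxx.
rewrite (eq_bigr (fun j => c j)); first by rewrite addn1 addSn.
by move=> j /negbTE ji; rewrite ffunE ji addn0.
Qed.

Lemma total_init M : Defs.total (init_urn M) = M.
Proof.
rewrite /Defs.total (eq_bigr (fun _ => 1%N)) ?sum1_card ?card_ord //.
by move=> i _; rewrite ffunE.
Qed.

Definition same_color_pairs M (c : config M) : rat :=
  \sum_(i < M) (c i)%:R * ((c i)%:R - 1).

Lemma same_color_pairs_incr M (c : config M) i :
  same_color_pairs (incr c i) = same_color_pairs c + 2 * (c i)%:R.
Proof.
rewrite /same_color_pairs (bigD1 i) //= [in RHS](bigD1 i) //= ffunE eqxx.
rewrite (eq_bigr (fun j => (c j)%:R * ((c j)%:R - 1))); first by rewrite natrD /=; ring.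
by move=> j /negbTE ji; rewrite ffunE ji addn0.
Qed.

Lemma same_color_probE M (c : config M) :
  (2 <= Defs.total c)%N ->
  same_color_prob c =
  same_color_pairs c / ((Defs.total c)%:R * ((Defs.total c)%:R - 1)).
Proof.
move=> hn; set n : rat := (Defs.total c)%:R.
have n0 : n != 0 by rewrite pnatr_eq0 -lt0n (leq_trans _ hn).
have n1 : n - 1 != 0 by rewrite subr_eq0 pnatr_eq1 gtn_eqF.
rewrite /same_color_prob -/n /same_color_pairs mulr_suml.
by apply: eq_bigr => i _; field; rewrite n0 n1.
Qed.

Definition urn_harmonic M (g : config M -> rat) : Prop :=
  forall c : config M, (0 < Defs.total c)%N ->
  \sum_(i < M) ((c i)%:R / (Defs.total c)%:R) * g (incr c i) = g c.

Definition polya_martingale M (c : config M) : rat :=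
  same_color_pairs c / ((Defs.total c)%:R * ((Defs.total c)%:R + 1))
  + 2 / ((Defs.total c)%:R + 1).

(* q is a martingale: averaging q after a step, with weights c_i / n, uses only
   sum_i c_i = n and sum_i c_i (c_i - 1) = P. *)
Lemma polya_martingale_harmonic M : urn_harmonic (@polya_martingale M).
Proof.
move=> c hn; set n : rat := (Defs.total c)%:R.
have n0 : n != 0 by rewrite pnatr_eq0 -lt0n.
have n1 : n + 1 != 0 by rewrite natr1 pnatr_eq0.
have n2 : n + 2 != 0 by rewrite -natrD pnatr_eq0 addn2.
have one_step i : ((c i)%:R / n) * polya_martingale (incr c i) =
    (c i)%:R * ((same_color_pairs c + 2) / (n * (n + 1) * (n + 2)) + 2 / (n * (n + 2)))
    + (c i)%:R * ((c i)%:R - 1) * (2 / (n * (n + 1) * (n + 2))).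
  rewrite /polya_martingale same_color_pairs_incr total_incr -/n -natr1 -/n.
  have n3 : n + 1 + 1 != 0 by rewrite -addrA.
  by field; rewrite ?n0 ?n1 ?n2 ?n3.
rewrite (eq_bigr _ (fun i _ => one_step i)) big_split /= -!mulr_suml.
rewrite -/(same_color_pairs c) -natr_sum -/(Defs.total c) -/n /polya_martingale -/n.
by field; rewrite n0 n1 n2.
Qed.

Lemma urn_exp_level M (F G : config M -> rat) k (c : config M) :
  (forall d, Defs.total d = (Defs.total c + k)%N -> F d = G d) ->
  urn_exp F k c = urn_exp G k c.
Proof.
elim: k c => [|k IH] c hFG /=; first by apply: hFG; rewrite addn0.
apply: eq_bigr => i _; congr (_ * _); apply: IH => d.
by rewrite total_incr addSnnS; apply: hFG.
Qed.

Lemma urn_exp_harmonic_affine M (g : config M -> rat) (A B : rat) k (c : config M) :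
  urn_harmonic g -> (0 < Defs.total c)%N ->
  urn_exp (fun d => A * g d + B) k c = A * g c + B.
Proof.
move=> hg; elim: k c => [|k IH] c hc //=.
have n0 : (Defs.total c)%:R != 0 :> rat by rewrite pnatr_eq0 -lt0n.
under eq_bigr => i _ do rewrite IH ?total_incr // mulrDr mulrCA.
rewrite big_split /= -mulr_sumr hg // -mulr_suml -mulr_suml -natr_sum.
by rewrite -/(Defs.total c) divff // mul1r.
Qed.

Lemma same_color_prob_martingale M (d : config M) (N : nat) :
  (2 <= N)%N -> Defs.total d = N ->
  same_color_prob d =
  (N%:R + 1) / (N%:R - 1) * polya_martingale d + (- 2) / (N%:R - 1).
Proof.
move=> hN hd; rewrite same_color_probE hd // /polya_martingale hd.
have N0 : N%:R != 0 :> rat by rewrite pnatr_eq0 -lt0n (leq_trans _ hN).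
have N1 : N%:R - 1 != 0 :> rat by rewrite subr_eq0 pnatr_eq1 gtn_eqF.
have N2 : N%:R + 1 != 0 :> rat by rewrite natr1 pnatr_eq0.
by field; rewrite N0 N1 N2.
Qed.

Lemma polya_martingale_init M : polya_martingale (init_urn M) = 2 / (M.+1)%:R.
Proof.
rewrite /polya_martingale total_init natr1 /same_color_pairs big1 ?mul0r ?add0r //.
by move=> i _; rewrite ffunE subrr mulr0.
Qed.

Lemma affine_below_id (R : realFieldType) (n x : R) :
  1 < n -> x <= 1 -> (n + 1) / (n - 1) * x + (- 2) / (n - 1) <= x.
Proof.
move=> n_gt1 x_le1; have n1_gt0 : 0 < n - 1 by rewrite subr_gt0.
rewrite mulrAC -mulrDl ler_pdivrMr //; nra.
Qed.

Theorem lemma5p1 (M N : nat) (hM : (1 <= M)%N) (hMN : (M <= N)%N) (hN : (2 <= N)%N) :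
  urn_exp (@same_color_prob M) (N - M) (init_urn M) <= 2 / (M.+1)%:R.
Proof.
have init_nonempty : (0 < Defs.total (init_urn M))%N by rewrite total_init.
rewrite (@urn_exp_level _ _ (fun d => (N%:R + 1) / (N%:R - 1) * polya_martingale d
                                      + (- 2) / (N%:R - 1))); last first.
  by move=> d; rewrite total_init subnKC //; apply: same_color_prob_martingale.
rewrite urn_exp_harmonic_affine //; last exact: polya_martingale_harmonic.
rewrite polya_martingale_init; apply: affine_below_id; first by rewrite ltr1n.
by rewrite ler_pdivrMr ?mul1r ?ltr0n // ler_nat ltnS.
Qed.
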